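(* Let $S$ be a type of shapes and, for each $s:S$, let $\mathrm{Pos}(s)$ be a type of indices with decidable equality. Let $(\beta,\beta',\oplus,\ominus)$ be a change structure on the base type, i.e. $\oplus:\beta\to\beta'\to\beta$ and $\ominus:\beta\to\beta\to\beta'$ with $x\oplus(y\ominus x)=y$ for all $x,y\in\beta$. Object types are generated by $A,B ::= \mathsf{b}\mid F_s\,A \mid A\times B\mid A+B$ (with $s:S$). Assign to each object type $A$ a value type $[\![A]\!]$, a change type $[\![A]\!]'$, an update $\oplus:[\![A]\!]\to[\![A]\!]'\to[\![A]\!]$ and a difference $\ominus:[\![A]\!]\to[\![A]\!]\to[\![A]\!]'$ recursively as follows: (i) $[\![\mathsf{b}]\!]=\beta$, $[\![\mathsf{b}]\!]'=\beta'$, with the given $\oplus,\ominus$; (ii) $[\![F_s A]\!]=\mathrm{Pos}(s)\to[\![A]\!]$, $[\![F_s A]\!]'=\mathrm{Pos}(s)\to[\![A]\!]'$, $f\oplus g=\lambda i.\,f\,i\oplus g\,i$, $f\ominus g=\lambda i.\,f\,i\ominus g\,i$; (iii) $[\![A\times B]\!]=[\![A]\!]\times[\![B]\!]$, $[\![A\times B]\!]'=[\![A]\!]'\times[\![B]\!]'$, with $\oplus,\ominus$ componentwise; (iv) $[\![A+B]\!]=[\![A]\!]+[\![B]\!]$ with injections $\iota_1,\iota_2$, and $[\![A+B]\!]'$ is the inductive type with constructors $\mathsf{cl}:[\![A]\!]'\to[\![A+B]\!]'$, $\mathsf{cr}:[\![B]\!]'\to[\![A+B]\!]'$, $\mathsf{sl}:[\![A]\!]\to[\![A+B]\!]'$,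 $\mathsf{sr}:[\![B]\!]\to[\![A+B]\!]'$, $\mathsf{null}:[\![A+B]\!]'$, where $\iota_1 x\oplus\mathsf{cl}\,x'=\iota_1(x\oplus x')$, $\iota_1x\oplus\mathsf{cr}\,y'=\iota_1x$, $\iota_2y\oplus\mathsf{cl}\,x'=\iota_2y$, $\iota_2y\oplus\mathsf{cr}\,y'=\iota_2(y\oplus y')$, $z\oplus\mathsf{sl}\,x=\iota_1x$, $z\oplus\mathsf{sr}\,y=\iota_2 y$, $z\oplus\mathsf{null}=z$, and $\iota_1x\ominus\iota_1y=\mathsf{cl}(x\ominus y)$, $\iota_1x\ominus\iota_2y=\mathsf{sl}\,x$, $\iota_2x\ominus\iota_1y=\mathsf{sr}\,x$, $\iota_2x\ominus\iota_2y=\mathsf{cr}(x\ominus y)$. Then for every object type $A$, $([\![A]\!],[\![A]\!]',\oplus,\ominus)$ is a change structure, i.e. $x\oplus(y\ominus x)=y$ for all $x,y\in[\![A]\!]$.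
   Context: A change structure consists of a type of values $V$, a type of changes $D$, an update operation $\oplus:V\to D\to V$ and a difference operation $\ominus:V\to V\to D$ satisfying the completeness law $x\oplus(y\ominus x)=y$ for all $x,y\in V$. *)

Inductive ty (S : Type) : Type :=
| tb : ty S
| tF : S -> ty S -> ty S
| tprod : ty S -> ty S -> ty S
| tsum : ty S -> ty S -> ty S.
Arguments tb {S}.
Arguments tF {S} _ _.
Arguments tprod {S} _ _.
Arguments tsum {S} _ _.

Inductive sumch (VA VB DA DB : Type) : Type :=
| cl : DA -> sumch VA VB DA DB
| cr : DB -> sumch VA VB DA DB
| sl : VA -> sumch VA VB DA DB
| sr : VB -> sumch VA VB DA DB
| null : sumch VA VB DA DB.
Arguments cl {VA VB DA DB} _.
Arguments cr {VA VB DA DB} _.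
Arguments sl {VA VB DA DB} _.
Arguments sr {VA VB DA DB} _.
Arguments null {VA VB DA DB}.

Section Sem.
Context (S : Type) (Pos : S -> Type) (beta beta' : Type).

Fixpoint val (A : ty S) : Type :=
  match A with
  | tb => beta
  | tF s A => Pos s -> val A
  | tprod A B => (val A * val B)%type
  | tsum A B => (val A + val B)%type
  end.

Fixpoint chg (A : ty S) : Type :=
  match A with
  | tb => beta'
  | tF s A => Pos s -> chg A
  | tprod A B => (chg A * chg B)%type
  | tsum A B => sumch (val A) (val B) (chg A) (chg B)
  end.

Context (oplusb : beta -> beta' -> beta) (ominusb : beta -> beta -> beta').

Fixpoint oplus (A : ty S) : val A -> chg A -> val A :=
  match A return val A -> chg A -> val A with
  | tb => oplusb
  | tF s A => fun f g => fun i => oplus A (f i) (g i)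
  | tprod A B => fun x d => (oplus A (fst x) (fst d), oplus B (snd x) (snd d))
  | tsum A B => fun z d =>
      match d with
      | cl x' => match z with inl x => inl (oplus A x x') | inr y => inr y end
      | cr y' => match z with inl x => inl x | inr y => inr (oplus B y y') end
      | sl x => inl x
      | sr y => inr y
      | null => z
      end
  end.

Fixpoint ominus (A : ty S) : val A -> val A -> chg A :=
  match A return val A -> val A -> chg A with
  | tb => ominusb
  | tF s A => fun f g => fun i => ominus A (f i) (g i)
  | tprod A B => fun x y => (ominus A (fst x) (fst y), ominus B (snd x) (snd y))
  | tsum A B => fun z w =>
      match z, w with
      | inl x, inl y => cl (ominus A x y)
      | inl x, inr _ => sl x
      | inr x, inl _ => sr x
      | inr x, inr y => cr (ominus B x y)
      end
  end.
End Sem.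

Arguments val {S} Pos beta A.
Arguments chg {S} Pos beta beta' A.
Arguments oplus {S Pos beta beta'} oplusb A _ _.
Arguments ominus {S Pos beta beta'} ominusb A _ _.

(* Completeness is preserved by each type former: pointwise for function spaces
   (by function extensionality), componentwise for products, and for sums by
   cases on the two injections, where [ominus] only produces [cl]/[cr] for equal
   injections and [sl]/[sr] (which overwrite the value) otherwise. *)

From Stdlib Require Import FunctionalExtensionality.

Definition change_complete {V D : Type}
  (op : V -> D -> V) (om : V -> V -> D) : Prop :=
  forall x y : V, op x (om y x) = y.

Section ChangeCompleteClosure.
Context {VA DA VB DB : Type}
  (opA : VA -> DA -> VA) (omA : VA -> VA -> DA)
  (opB : VB -> DB -> VB) (omB : VB -> VB -> DB).

Definition sum_oplus (z : VA + VB) (d : sumch VA VB DA DB) : VA + VB :=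
  match d with
  | cl x' => match z with inl x => inl (opA x x') | inr y => inr y end
  | cr y' => match z with inl x => inl x | inr y => inr (opB y y') end
  | sl x => inl x
  | sr y => inr y
  | null => z
  end.

Definition sum_ominus (z w : VA + VB) : sumch VA VB DA DB :=
  match z, w with
  | inl x, inl y => cl (omA x y)
  | inl x, inr _ => sl x
  | inr x, inl _ => sr x
  | inr x, inr y => cr (omB x y)
  end.

Lemma change_complete_fun (I : Type) :
  change_complete opA omA ->
  change_complete (fun (f : I -> VA) g i => opA (f i) (g i))
                  (fun (f g : I -> VA) i => omA (f i) (g i)).
Proof.
  intros HA f g; apply functional_extensionality; intro i; apply HA.
Qed.

Lemma change_complete_prod :
  change_complete opA omA -> change_complete opB omB ->
  change_complete (fun (x : VA * VB) (d : DA * DB) =>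
                     (opA (fst x) (fst d), opB (snd x) (snd d)))
                  (fun x y => (omA (fst x) (fst y), omB (snd x) (snd y))).
Proof.
  intros HA HB [xa xb] [ya yb]; simpl; rewrite HA, HB; reflexivity.
Qed.

Lemma change_complete_sum :
  change_complete opA omA -> change_complete opB omB ->
  change_complete sum_oplus sum_ominus.
Proof.
  intros HA HB [xa | xb] [ya | yb]; simpl; rewrite ?HA, ?HB; reflexivity.
Qed.

End ChangeCompleteClosure.

Theorem lemma5p1 (S : Type) (Pos : S -> Type)
  (Pos_eqdec : forall (s : S) (i j : Pos s), {i = j} + {i <> j})
  (beta beta' : Type)
  (oplusb : beta -> beta' -> beta) (ominusb : beta -> beta -> beta')
  (complete_b : forall x y : beta, oplusb x (ominusb y x) = y) :
  forall (A : ty S) (x y : val Pos beta A),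
    oplus oplusb A x (ominus ominusb A y x) = y.
Proof.
  intro A.
  change (change_complete (@oplus _ Pos _ _ oplusb A) (ominus ominusb A)).
  induction A as [| s A IH | A IHA B IHB | A IHA B IHB].
  - exact complete_b.
  - exact (change_complete_fun _ _ (Pos s) IH).
  - exact (change_complete_prod _ _ _ _ IHA IHB).
  - exact (change_complete_sum _ _ _ _ IHA IHB).
Qed.
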